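(* For either choice $\zeta\in\{q,-q^3\}$, the function $\mathcal{F}(\lambda_1,\dots,\lambda_{L-1}\mid v_1,v_2)=\langle\bar0|\mathcal{E}(\lambda_{L-1})\cdots\mathcal{E}(\lambda_1)\mathcal{B}(v_2)\mathcal{B}(v_1)|0\rangle$ vanishes whenever $y_1=e^{2v_1}=e^{2\mu_j}\zeta$ for some $1\le j\le L$.
   Context: Let $q\in\mathbb{C}\setminus\{0\}$ (with a fixed choice of $q^{1/2}$) and $\zeta\in\{q,-q^3\}$ ($\zeta=q$: Fateev–Zamolodchikov model; $\zeta=-q^3$: Izergin–Korepin model). For $\lambda\in\mathbb{C}$ put $x=e^{2\lambda}$ and define $a(\lambda)=(x-\zeta)(x-q^2)$, $b(\lambda)=q(x-1)(x-\zeta)$, $c(\lambda)=(1-q^2)(x-\zeta)$, $\bar c(\lambda)=x(1-q^2)(x-\zeta)$, and for $\alpha,\beta\in\{1,2,3\}$, with $\beta'=4-\beta$: $d_{\alpha,\beta}(\lambda)=q(x-1)(x-\zeta)+x(q^2-1)(\zeta-1)$ if $\alpha=\beta=2$; $d_{\alpha,\beta}(\lambda)=(x-1)[(x-\zeta)+x(q^2-1)]$ if $\alpha=\beta\neq 2$; $d_{\alpha,\beta}(\lambda)=(q^2-1)[\zeta(x-1)q^{(\alpha-\beta)/2}-\delta_{\alpha,\beta'}(x-\zeta)]$ if $\alpha<\beta$; $d_{\alpha,\beta}(\lambda)=x(q^2-1)[(x-1)q^{(\alpha-\beta)/2}-\delta_{\alpha,\beta'}(x-\zeta)]$ if $\alpha>\beta$.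 Let $e_1,e_2,e_3$ be the standard basis of $\mathbb{C}^3$ and $E_{\alpha,\beta}$ the unit matrices. Define $\mathcal{R}(\lambda)\in\mathrm{End}(\mathbb{C}^3\otimes\mathbb{C}^3)$ as the $9\times 9$ matrix in the ordered basis $e_1\otimes e_1,e_1\otimes e_2,e_1\otimes e_3,e_2\otimes e_1,e_2\otimes e_2,e_2\otimes e_3,e_3\otimes e_1,e_3\otimes e_2,e_3\otimes e_3$ (indices $1,\dots,9$) whose only nonzero entries (row, column) are: $(1,1)=a$; $(2,2)=b$, $(2,4)=c$; $(3,3)=d_{1,1}$, $(3,5)=d_{1,2}$, $(3,7)=d_{1,3}$; $(4,2)=\bar c$, $(4,4)=b$; $(5,3)=d_{2,1}$, $(5,5)=d_{2,2}$, $(5,7)=d_{2,3}$; $(6,6)=b$, $(6,8)=c$; $(7,3)=d_{3,1}$, $(7,5)=d_{3,2}$, $(7,7)=d_{3,3}$; $(8,6)=\bar c$, $(8,8)=b$; $(9,9)=a$ (all evaluated at $\lambda$). Fix $L\ge1$ and inhomogeneities $\mu_1,\dots,\mu_L\in\mathbb{C}$. With $V_a=V_1=\dots=V_L=\mathbb{C}^3$, let $\mathcal{T}(\lambda)=\mathcal{R}_{a1}(\lambda-\mu_1)\cdots\mathcal{R}_{aL}(\lambda-\mu_L)$, where $\mathcal{R}_{aj}$ acts as $\mathcal{R}$ on $V_a\otimes V_j$. Write $\mathcal{T}(\lambda)=\sum_{\alpha,\beta}E_{\alpha,\beta}\otimes\mathcal{T}_\alpha^\beta(\lambda)$ and set $\mathcal{B}(\lambda)=\mathcal{T}_1^2(\lambda)$,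 $\mathcal{E}(\lambda)=\mathcal{T}_1^3(\lambda)$, operators on $V_1\otimes\cdots\otimes V_L$. Let $|0\rangle=e_1^{\otimes L}$ and let $\langle\bar0|$ be the dual vector of $e_3^{\otimes L}$. *)

From mathcomp Require Import all_boot all_algebra.
From mathcomp Require Import reals sequences trigo.
From mathcomp Require Import complex.
Set Implicit Arguments. Unset Strict Implicit. Unset Printing Implicit Defensive.
Import GRing.Theory Num.Theory.
Local Open Scope ring_scope.

Definition cexp {R : realType} (z : R[i]) : R[i] :=
  ((expR (complex.Re z))%:C * (cos (complex.Im z) +i* sin (complex.Im z)))%C.

Section Rmatrix.
Variable R : realType.
Local Notation C := (R[i]).
(* q, s = the fixed choice of q^{1/2}, zeta *)
Variables (q s zeta : C).

Definition wa (x : C) : C := (x - zeta) * (x - q ^+ 2).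
Definition wb (x : C) : C := q * (x - 1) * (x - zeta).
Definition wc (x : C) : C := (1 - q ^+ 2) * (x - zeta).
Definition wcbar (x : C) : C := x * (1 - q ^+ 2) * (x - zeta).

(* d_{alpha,beta}(x), alpha beta in {1,2,3}; q^{(alpha-beta)/2} := s ^ (alpha - beta) *)
Definition wd (al be : nat) (x : C) : C :=
  let qh := s ^ ((al%:Z - be%:Z)%R) in
  let del := ((al == 4 - be)%N)%:R : C in
  if (al == 2)%N && (be == 2)%N then
    q * (x - 1) * (x - zeta) + x * (q ^+ 2 - 1) * (zeta - 1)
  else if al == be then (x - 1) * ((x - zeta) + x * (q ^+ 2 - 1))
  else if (al < be)%N then (q ^+ 2 - 1) * (zeta * (x - 1) * qh - del * (x - zeta))
  else x * (q ^+ 2 - 1) * ((x - 1) * qh - del * (x - zeta)).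

(* The 9x9 matrix, with 0-based row/column numbers (paper's index minus 1),
   as a function of x = e^{2 lambda}. *)
Definition Rentry (x : C) (r c : nat) : C :=
  match r, c with
  | 0, 0 => wa x
  | 1, 1 => wb x | 1, 3 => wc x
  | 2, 2 => wd 1 1 x | 2, 4 => wd 1 2 x | 2, 6 => wd 1 3 x
  | 3, 1 => wcbar x | 3, 3 => wb x
  | 4, 2 => wd 2 1 x | 4, 4 => wd 2 2 x | 4, 6 => wd 2 3 x
  | 5, 5 => wb x | 5, 7 => wc x
  | 6, 2 => wd 3 1 x | 6, 4 => wd 3 2 x | 6, 6 => wd 3 3 x
  | 7, 5 => wcbar x | 7, 7 => wb x
  | 8, 8 => wa x
  | _, _ => 0
  end.

Definition Rmx (lam : C) : 'M[C]_9 :=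
  \matrix_(r < 9, c < 9) Rentry (cexp (2 * lam)) r c.

(* index of e_i (x) e_j (i, j : 'I_3 stand for 1,2,3) in the ordered basis *)
Definition tidx (i j : 'I_3) : 'I_9 := inord (3 * i + j).

(* basis configurations of V_1 (x) ... (x) V_L *)
Definition cfg (L : nat) := {ffun 'I_L -> 'I_3}.
(* operators on V_1 (x) ... (x) V_L, given by their matrix entries <s| A |s'> *)
Definition op (L : nat) := cfg L -> cfg L -> C.

Definition op_mul {L} (A B : op L) : op L :=
  fun s s' => \sum_(t : cfg L) A s t * B t s'.
Definition op_id {L} : op L := fun s s' => (s == s')%:R.
Definition op_prod {L} (l : seq (op L)) : op L := foldr op_mul op_id l.

(* Entries of T_alpha^beta(lambda), where
   T(lambda) = R_{a1}(lambda - mu_1) ... R_{aL}(lambda - mu_L)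
   = sum_{alpha,beta} E_{alpha,beta} (x) T_alpha^beta(lambda):
   the auxiliary-space indices are contracted along a chain g. *)
Definition Top {L} (mu : 'I_L -> C) (al be : 'I_3) (lam : C) : op L :=
  fun s s' =>
    \sum_(g : {ffun 'I_L.+1 -> 'I_3} | (g ord0 == al) && (g ord_max == be))
      \prod_(k < L)
        Rmx (lam - mu k) (tidx (g (widen_ord (leqnSn L) k)) (s k))
                         (tidx (g (lift ord0 k)) (s' k)).

Definition i1 : 'I_3 := @Ordinal 3 0 isT.
Definition i2 : 'I_3 := @Ordinal 3 1 isT.
Definition i3 : 'I_3 := @Ordinal 3 2 isT.

Definition Bop {L} (mu : 'I_L -> C) (lam : C) : op L := Top mu i1 i2 lam.
Definition Eop {L} (mu : 'I_L -> C) (lam : C) : op L := Top mu i1 i3 lam.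

(* |0> = e_1^{(x)L}, <0bar| = dual of e_3^{(x)L} *)
Definition vac {L} : cfg L := [ffun _ => i1].
Definition dvac {L} : cfg L := [ffun _ => i3].

(* F(lambda_1..lambda_{L-1} | v1, v2)
   = <0bar| E(lambda_{L-1}) ... E(lambda_1) B(v2) B(v1) |0>,
   with lam i = lambda_{i+1}. *)
Definition Ffun {L} (mu : 'I_L -> C) (lam : 'I_L.-1 -> C) (v1 v2 : C) : C :=
  op_prod ([seq Eop mu (lam i) | i <- rev (enum 'I_L.-1)]
             ++ [:: Bop mu v2; Bop mu v1]) dvac vac.

End Rmatrix.

(* B(v) already annihilates |0> when some x_j = e^{2(v - mu_j)} equals zeta.
   The R-matrix conserves charge: its entry from e_c (x) e_d to e_a (x) e_b
   vanishes unless a + b = c + d.  Hence in <t| T_1^beta(v) |0>, where every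
   quantum input is e_1, the auxiliary index can only grow along the chain
   R_{a1} ... R_{aL}; for beta in {1, 2} it therefore stays in {1, 2}, so at
   site j only the columns e_1 (x) e_1 and e_2 (x) e_1 of R are used.  Their
   entries a, b, c all carry the factor x - zeta, so they vanish at x = zeta.
   Nothing depends on q, q^{1/2} or on the particular choice of zeta. *)
From mathcomp Require Import all_boot all_algebra.
From mathcomp Require Import reals sequences trigo exp.
From mathcomp Require Import complex.
From mathcomp Require Import ring zify.
Import GRing.Theory Num.Theory.
Local Open Scope ring_scope.

Section ComplexExp.
Variable R : realType.

Lemma cexpD (a b : R[i]) : cexp (a + b) = cexp a * cexp b.
Proof.
case: a => a1 a2; case: b => b1 b2; rewrite /cexp /= expRD cosD sinD.
by apply/eqP; rewrite eq_complex /=; apply/andP; split; apply/eqP; ring.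
Qed.

Lemma cexp0 : cexp (0 : R[i]) = 1.
Proof.
rewrite /cexp /= expR0 cos0 sin0.
by apply/eqP; rewrite eq_complex /=; apply/andP; split; apply/eqP; ring.
Qed.

Lemma cexp_neq0 (a : R[i]) : cexp a != 0.
Proof.
apply/eqP => ea0; have := cexpD a (- a).
by rewrite subrr cexp0 ea0 mul0r => /eqP; rewrite oner_eq0.
Qed.

Lemma cexpB_eq (a b z : R[i]) : cexp a = cexp b * z -> cexp (a - b) = z.
Proof.
move=> eab; apply: (mulIf (cexp_neq0 b)).
by rewrite -cexpD subrK eab mulrC.
Qed.

End ComplexExp.

Lemma nondecreasing_le_ord_max {n} (f : 'I_n.+1 -> nat) :
  (forall k : 'I_n, f (widen_ord (leqnSn n) k) <= f (lift ord0 k))%N ->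
  forall i, (f i <= f ord_max)%N.
Proof.
move=> f_step i.
pose F m := f (inord m).
have F_mono : {in [pred m | m <= n]%N &, {homo F : m m' / m <= m' >-> m <= m'}}%N.
  apply: homo_leq_in => [//|y x z|m m' _ le_m'n k /andP[_ lt_km']|m _ lt_mn].
  - exact: leq_trans.
  - exact: ltnW (leq_trans lt_km' le_m'n).
  have := f_step (Ordinal lt_mn); rewrite /F.
  by congr (f _ <= f _)%N; apply/val_inj; rewrite /= inordK //= ltnS // ltnW.
have := F_mono i n (ltn_ord i) (leqnn n) (ltn_ord i).
by rewrite /F inord_val; congr (_ <= f _)%N; apply/val_inj; rewrite /= inordK.
Qed.

Lemma op_prod_cat1_eq0 (R : realType) L (l : seq (op R L)) (B : op R L) (u : cfg L) :
  (forall t, B t u = 0) -> forall t, op_prod (l ++ [:: B]) t u = 0.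
Proof.
move=> Bu0; elim: l => [|A l IHl] t /=; rewrite /op_mul; apply: big1 => t' _.
  by rewrite /op_id; case: eqP => [->|_]; rewrite ?Bu0 ?mul0r ?mulr0.
by rewrite IHl mulr0.
Qed.

Lemma tidxE (a b : 'I_3) : tidx a b = (3 * a + b)%N :> nat.
Proof. by rewrite /tidx inordK //; have := ltn_ord a; have := ltn_ord b; lia. Qed.

Section RmatrixColumns.
Variable R : realType.
Variables q s zeta : R[i].

Lemma Rmx_charge_e1 (lam : R[i]) (a b c : 'I_3) :
  Rmx q s zeta lam (tidx a b) (tidx c i1) != 0 -> (a <= c)%N.
Proof.
rewrite mxE !tidxE addn0.
case: a => [[|[|[|?]]] ?] //; case: b => [[|[|[|?]]] ?] //;
  case: c => [[|[|[|?]]] ?] //=; by rewrite eqxx.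
Qed.

Lemma Rmx_col_e1_zeta (lam : R[i]) (a b c : 'I_3) :
  cexp (2 * lam) = zeta -> (c <= 1)%N ->
  Rmx q s zeta lam (tidx a b) (tidx c i1) = 0.
Proof.
rewrite mxE !tidxE addn0 => ->.
case: a => [[|[|[|?]]] ?] //; case: b => [[|[|[|?]]] ?] //;
  case: c => [[|[|[|?]]] ?] //= _;
  by rewrite /wa /wb /wc /wcbar subrr ?mulr0 ?mul0r.
Qed.

Lemma Top_vac_eq0 L (mu : 'I_L -> R[i]) (al be : 'I_3) (v : R[i]) (j : 'I_L) :
  (be <= 1)%N -> cexp (2 * (v - mu j)) = zeta ->
  forall t, Top q s zeta mu al be v t vac = 0.
Proof.
move=> be_le1 xj_zeta t; apply: big1 => g /andP[_ /eqP g_last].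
apply/eqP/negPn/negP => /prodf_neq0 g_nz.
have g_step k : (g (widen_ord (leqnSn L) k) <= g (lift ord0 k))%N.
  by have := g_nz k isT; rewrite ffunE => /Rmx_charge_e1.
have g_le1 i : (g i <= 1)%N.
  rewrite (leq_trans _ be_le1) // -g_last.
  exact: (nondecreasing_le_ord_max (fun i => g i) g_step).
by have := g_nz j isT; rewrite ffunE (Rmx_col_e1_zeta _ _ _ _ xj_zeta (g_le1 _)) eqxx.
Qed.

End RmatrixColumns.

Theorem lemma2p3 (R : realType) (L : nat) (hL : (1 <= L)%N)
    (q s zeta : R[i]) (hq : q != 0) (hs : s ^+ 2 = q)
    (hzeta : zeta = q \/ zeta = - q ^+ 3)
    (mu : 'I_L -> R[i]) (lam : 'I_L.-1 -> R[i]) (v1 v2 : R[i]) (j : 'I_L) :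
  cexp (2 * v1) = cexp (2 * mu j) * zeta ->
  Ffun q s zeta mu lam v1 v2 = 0.
Proof.
move=> /cexpB_eq; rewrite -mulrBr => x_zeta.
rewrite /Ffun -cat_rcons; apply: op_prod_cat1_eq0.
exact: Top_vac_eq0 x_zeta.
Qed.
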